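(* For every $\tau$ with $0<\tau<1$, $$R(\tau)\ \le\ \overline{R}(\tau):=\min_{0\le\tau'\le\tau}\ \max\Big\{r\in[0,1]:\ h(v)\le 1-v\,h\Big(\min\Big(\tfrac{\tau-\tau'}{v(1-\tau')},\tfrac12\Big)\Big)\Big\},$$ where, for given $r$ and $\tau'$, $v=v(r,\tau')$ denotes the real number with $0\le v\le 1/2$ and $h(v)(1-\tau')=r$.
   Context: $h(x)=-x\log_2x-(1-x)\log_2(1-x)$ is the binary entropy function. Binary Z-channel with noiseless feedback: an input $0$ is always received as $0$; an input $1$ is received as $1$ or (an error) as $0$. A feedback encoding strategy of blocklength $n$ for a finite message set $\mathcal M$ consists of functions $c_i:\mathcal M\times\{0,1\}^{i-1}\to\{0,1\}$, $i=1,\dots,n$; when sending $m$ the $i$-th transmitted symbol is $c_i(m,y^{i-1})$, with $y^{i-1}$ the previously received symbols. Let $c(m,y^{n-1})=(c_1(m),\dots,c_n(m,y^{n-1}))$ and $\mathcal Y^n_t(m)=\{y^n\in\{0,1\}^n:y_i\le c_i(m,y^{i-1})\ \forall i,\ d_H(y^n,c(m,y^{n-1}))\le t\}$. The strategy is successful if the sets $\mathcal Y^n_t(m)$, $m\in\mathcal M$, are pairwise disjoint. $M(n,t)$ is the maximum $|\mathcal M|$ admitting a successful strategy of blocklength $n$ with at most $t$ errors, and $R(\tau):=\limsup_{n\to\infty}\frac1n\log_2M(n,\lceil\tau n\rceil)$. *)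

From HB Require Import structures.
From mathcomp Require Import all_boot all_order all_algebra.
From mathcomp Require Import all_classical all_reals all_analysis.
Set Implicit Arguments. Unset Strict Implicit. Unset Printing Implicit Defensive.
Import Order.TTheory GRing.Theory Num.Theory.
Local Open Scope ring_scope.
Local Open Scope classical_set_scope.

Section Defs.
Variable R : realType.

(* base-2 logarithm; note ln x = 0 for x <= 0, so 0 * log2 0 = 0 *)
Definition log2 (x : R) : R := ln x / ln 2.

Definition h (x : R) : R := - x * log2 x - (1 - x) * log2 (1 - x).

Definition inner_set (tau tau' : R) : set R :=
  [set r | 0 <= r <= 1 /\
     exists v : R, [/\ 0 <= v <= 2^-1, h v * (1 - tau') = r &
       h v <= 1 - v * h (Num.min ((tau - tau') / (v * (1 - tau'))) 2^-1)]].

Definition Rbar (tau : R) : R :=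
  inf [set sup (inner_set tau tau') | tau' in [set tau' : R | 0 <= tau' <= tau]].
End Defs.

(* A feedback encoding strategy for the message set 'I_k: c m p is the symbol
   c_i(m, y^{i-1}) sent when the previously received symbols are p = y^{i-1}
   (only prefixes p of length < n matter). *)
Definition strategy (k : nat) := 'I_k -> seq bool -> bool.

Definition inY (n t k : nat) (c : strategy k) (m : 'I_k) (y : seq bool) : Prop :=
  [/\ size y = n,
      (forall i, (i < n)%N -> nth false y i ==> c m (take i y)) &
      (\sum_(i < n) (nth false y i != c m (take i y)) <= t)%N].

Definition successful (n t k : nat) (c : strategy k) : Prop :=
  forall (m1 m2 : 'I_k) (y : seq bool), m1 != m2 ->
    inY n t c m1 y -> inY n t c m2 y -> False.

Definition admits (n t k : nat) : Prop := exists c : strategy k, successful n t c.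

(* Any successful strategy has at most 2^n messages (the sets Y are nonempty
   and disjoint subsets of {0,1}^n), so the maximum may be taken over k <= 2^n. *)
Definition Mnt (n t : nat) : nat :=
  \max_(k < (2 ^ n).+1 | `[< admits n t k >]) k.

Definition Rate (R : realType) (tau : R) : R :=
  limn_sup (fun n : nat =>
    (n%:R)^-1 * log2 ((Mnt n `|Num.ceil (tau * n%:R)|%N)%:R : R)).

(* Fix tau' <= tau and let t' = floor (tau' n).  The channel first spends up to t' errors
   turning the first t' transmitted symbols into zeros; every message then keeps an error
   budget of at least t - t' >= (tau - tau') n for the remaining m = n - t' symbols, and
   distinct messages still have disjoint sets of receivable continuations.  A message with a
   receivable continuation of weight at most K ~ v m owns a word of the Hamming ball of
   radius K, so there are at most 2^(m h(v)) of them.  Every other message sends at least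
   K + 1 ones, any J ~ p K of which the channel may still flip, so it owns at least
   C(K + 1, J) ~ 2^(K h(p)) continuations and there are at most 2^(m (1 - v h(p))) of them.
   When h(v) > 1 - v h(p) the first count dominates and R(tau) <= (1 - tau') h(v).  Taking
   v with (1 - tau') h(v) just above the inner maximum (intermediate value theorem) and
   minimizing over tau' gives the bound. *)

From HB Require Import structures.
From mathcomp Require Import all_boot all_order all_algebra.
From mathcomp Require Import all_classical all_reals all_analysis.
From mathcomp Require Import zify ring lra.
Import Order.TTheory GRing.Theory Num.Theory numFieldNormedType.Exports.

Set Implicit Arguments. Unset Strict Implicit. Unset Printing Implicit Defensive.

Fixpoint bitseqs (r : nat) : seq (seq bool) :=
  if r is r'.+1 then map (cons true) (bitseqs r') ++ map (cons false) (bitseqs r')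
  else [:: [::]].

Lemma size_bitseqs r : size (bitseqs r) = 2 ^ r.
Proof. by elim: r => //= r IH; rewrite size_cat !size_map IH expnS mul2n addnn. Qed.

Lemma mem_bitseqs r s : (s \in bitseqs r) = (size s == r).
Proof.
elim: r s => [|r IH] s /=; first by rewrite inE size_eq0.
rewrite mem_cat; apply/orP/eqP => [[] /mapP[s' + ->] | ]; try by rewrite IH => /eqP<-.
case: s => // -[] s [/eqP]; rewrite -IH => hs; [left | right]; exact: map_f.
Qed.

Lemma count_bitseqsS (P : pred (seq bool)) r :
  count P (bitseqs r.+1) =
  count (fun s => P (true :: s)) (bitseqs r) + count (fun s => P (false :: s)) (bitseqs r).
Proof. by rewrite /= count_cat !count_map. Qed.

Definition weight (s : seq bool) : nat := count id s.

Lemma sum_count_disjoint (T : eqType) (I : finType) (P : I -> pred T) (a : pred T)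
    (L : seq T) :
  {in L, forall x i, P i x -> a x} ->
  {in L, forall x i1 i2, P i1 x -> P i2 x -> i1 = i2} ->
  \sum_(i : I) count (P i) L <= count a L.
Proof.
elim: L => [|x L IH] Pa Pdisj /=; first by rewrite big1.
have xL : x \in x :: L by rewrite mem_head.
rewrite big_split leq_add //=; last first.
  by apply: IH => y yL; [apply: Pa | apply: Pdisj]; rewrite inE yL orbT.
case: (pickP (P^~ x)) => [i0 Pi0 | noP]; last by rewrite big1 // => i _; rewrite noP.
rewrite (bigD1 i0) //= Pi0 big1 ?(Pa x xL i0) // => i ne; apply/eqP; rewrite eqb0.
by apply/negP => Pi; rewrite (Pdisj x xL _ _ Pi Pi0) eqxx in ne.
Qed.

Section Receivable.
Variable f : seq bool -> bool.

(* [receivable p b s]: after the received history [p], the word [s] can be received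
   with at most [b] further errors; this is [inY] relative to a prefix. *)
Fixpoint receivable (p : seq bool) (b : nat) (s : seq bool) : bool :=
  if s is y :: s' then
    [&& y ==> f p, (y != f p) <= b & receivable (rcons p y) (b - (y != f p)) s']
  else true.

Lemma receivable_mono p b1 b2 s : b1 <= b2 -> receivable p b1 s -> receivable p b2 s.
Proof.
elim: s p b1 b2 => //= y s IH p b1 b2 hb /and3P[-> he hs].
by rewrite (leq_trans he hb); apply: IH hs; apply: leq_sub2r.
Qed.

Lemma has_receivable p b r : has (receivable p b) (bitseqs r).
Proof.
elim: r p => [|r IH] p //.
have /hasP[s hs rs] := IH (rcons p (f p)).
apply/hasP; exists (f p :: s); last by rewrite /= implybb eqxx subn0 rs.
by rewrite mem_bitseqs /= eqSS -mem_bitseqs.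
Qed.

Lemma binomial_le_count_receivable r p b k j : j <= b ->
  (forall s, size s = r -> receivable p b s -> k <= weight s) ->
  'C(k, j) <= count (receivable p b) (bitseqs r).
Proof.
elim: r p b k j => [|r IH] p b k [|j] hj hw; try by rewrite bin0 -has_count has_receivable.
  by move: (hw [::] erefl isT); rewrite leqn0 => /eqP->; rewrite bin0n.
rewrite count_bitseqsS /=; case fp: (f p); rewrite /= ?subn0.
- case: k hw => [|k] hw; first by rewrite bin0n.
  have b0 : 0 < b by apply: leq_ltn_trans hj.
  rewrite binS b0 leq_add //.
    apply: IH => // s hs rs.
    by move: (hw (true :: s)); rewrite /= fp subn0 hs rs /weight /= => /(_ erefl isT).
  apply: leq_trans (leq_bin2l _ (leqnSn k)) _; apply: IH => [|s hs rs]; first lia.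
  by move: (hw (false :: s)); rewrite /= fp b0 hs rs /weight => /(_ erefl isT).
- rewrite count_pred0 add0n; apply: IH => // s hs rs.
  by move: (hw (false :: s)); rewrite /= fp subn0 hs rs /weight => /(_ erefl isT).
Qed.

Lemma receivable_zeros p b r s : r <= b ->
  receivable (p ++ nseq r false) (b - r) s -> receivable p b (nseq r false ++ s).
Proof.
elim: r p b => [|r IH] p b hr /=; first by rewrite cats0 subn0.
rewrite -cat_rcons => hs; rewrite (leq_trans (leq_b1 _) (leq_trans _ hr)) //=.
apply: IH; first lia.
by apply: receivable_mono hs; lia.
Qed.

Lemma receivable_spec p b s : receivable p b s ->
  (forall i, i < size s -> nth false s i ==> f (p ++ take i s)) /\
  \sum_(i < size s) (nth false s i != f (p ++ take i s)) <= b.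
Proof.
elim: s p b => [|y s IH] p b /=; first by rewrite big_ord0.
move=> /and3P[hy he /IH[hnth hsum]]; split.
  by case=> [|i] hi; rewrite /= ?take0 ?cats0 // -cat_rcons hnth.
rewrite big_ord_recl /= cats0.
under eq_bigr => i _ do rewrite add0n -cat_rcons.
by rewrite -(subnKC he) leq_add2l.
Qed.

End Receivable.

Lemma receivable_inY n t k (c : strategy k) m y :
  size y = n -> receivable (c m) [::] t y -> inY n t c m y.
Proof. by move=> <- /receivable_spec[]. Qed.

Section SuccessfulStrategy.
Variables (n t k : nat) (c : strategy k) (t' : nat).
Hypotheses (hc : successful n t c) (ht' : t' <= t) (htn : t' <= n).

(* The channel turns the first [t'] sent symbols into zeros, spending at most [t'] errors. *)
Let tail_receivable (i : 'I_k) := receivable (c i) (nseq t' false) (t - t').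

Lemma tail_receivable_disjoint :
  {in bitseqs (n - t'), forall s i1 i2,
    tail_receivable i1 s -> tail_receivable i2 s -> i1 = i2}.
Proof.
move=> s; rewrite mem_bitseqs => /eqP hs i1 i2 r1 r2.
case: (eqVneq i1 i2) => // ne; case: (@hc i1 i2 (nseq t' false ++ s) ne).
all: apply: receivable_inY; [by rewrite size_cat size_nseq hs subnKC | exact: receivable_zeros].
Qed.

Lemma sum_count_tail_receivable :
  \sum_i count (tail_receivable i) (bitseqs (n - t')) <= 2 ^ (n - t').
Proof.
rewrite -size_bitseqs -count_predT.
by apply: sum_count_disjoint => // s sL i1 i2; apply: tail_receivable_disjoint.
Qed.

Lemma card_le_exp2 : k <= 2 ^ (n - t').
Proof.
rewrite -[k]card_ord -sum1_card; apply: leq_trans sum_count_tail_receivable.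
by apply: leq_sum => i _; rewrite -has_count has_receivable.
Qed.

Lemma card_le_light_add_heavy K J : J <= t - t' -> J <= K.+1 ->
  k <= count (fun s => weight s <= K) (bitseqs (n - t')) + 2 ^ (n - t') %/ 'C(K.+1, J).
Proof.
move=> hJ hJK; set L := bitseqs (n - t').
pose light_receivable i s := tail_receivable i s && (weight s <= K).
pose light i := has (light_receivable i) L.
rewrite -[k]card_ord -sum1_card (bigID light) /= leq_add //.
  apply: (@leq_trans (\sum_i count (light_receivable i) L)).
    rewrite big_mkcond /=; apply: leq_sum => i _.
    by case: ifP => //; rewrite /light has_count.
  apply: sum_count_disjoint => [s _ i | s sL i1 i2]; rewrite /light_receivable.
    by case/andP.
  by move=> /andP[r1 _] /andP[r2 _]; apply: tail_receivable_disjoint r1 r2.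
rewrite leq_divRL ?bin_gt0 // big_distrl /=.
apply: leq_trans sum_count_tail_receivable.
rewrite big_mkcond /=; apply: leq_sum => i _; case: ifP => // heavy.
rewrite mul1n; apply: binomial_le_count_receivable => // s hs rs.
rewrite ltnNge; apply: contraNN heavy => hw; apply/hasP; exists s.
  by rewrite mem_bitseqs hs.
by rewrite /light_receivable /tail_receivable rs.
Qed.

End SuccessfulStrategy.

Local Open Scope ring_scope.

Section Entropy.
Variable R : realType.

Definition entropy (x : R) : R := - (x * ln x + (1 - x) * ln (1 - x)).

Lemma ln2_gt0 : 0 < ln (2 : R).
Proof. by apply: ln_gt0; lra. Qed.

Lemma h_entropy x : h x = entropy x / ln 2.
Proof. by have l2 := ln2_gt0; rewrite /h /entropy /log2; field; lra. Qed.

Lemma entropy_ge0 x : 0 <= x <= 1 -> 0 <= entropy x.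
Proof.
move=> /andP[x0 x1]; rewrite /entropy oppr_ge0.
have lx : ln x <= 0 by apply: ln_le0.
have l1x : ln (1 - x) <= 0 by apply: ln_le0; lra.
nra.
Qed.

Lemma entropy_le x c : 0 < x < 1 -> 0 < c -> entropy x <= c + x * (1 - ln c).
Proof.
move=> /andP[x0 x1] c0.
have q0 : 0 < 1 - x by lra.
have a : x * (ln c - ln x) <= c.
  have := ln_sublinear (divr_gt0 c0 x0); rewrite ln_div ?posrE // => /ltW hl.
  by rewrite [leRHS](_ : c = x * (c / x)) ?ler_pM2l //; field; lra.
have b : (1 - x) * - ln (1 - x) <= x.
  have : -1 < x / (1 - x) by have := divr_ge0 (ltW x0) (ltW q0); lra.
  move=> /le_ln1Dx.
  have -> : 1 + x / (1 - x) = (1 - x)^-1 by field; lra.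
  rewrite lnV ?posrE // => hl.
  by rewrite [leRHS](_ : x = (1 - x) * (x / (1 - x))) ?ler_pM2l //; field; lra.
rewrite /entropy; nra.
Qed.

Definition bernoulli_weight (v : R) (s : seq bool) : R :=
  \prod_(y <- s) (if y then v else 1 - v).

Lemma sum_bernoulli_weight v r : \sum_(s <- bitseqs r) bernoulli_weight v s = 1.
Proof.
elim: r => [|r IH] /=; first by rewrite big_seq1 /bernoulli_weight big_nil.
rewrite big_cat !big_map /=.
under eq_bigr => s _ do rewrite /bernoulli_weight big_cons /=.
under [X in _ + X]eq_bigr => s _ do rewrite /bernoulli_weight big_cons /=.
by rewrite -!mulr_sumr IH; ring.
Qed.

Lemma bernoulli_weightE v s :
  bernoulli_weight v s = v ^+ weight s * (1 - v) ^+ (size s - weight s).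
Proof.
elim: s => [|y s IH]; first by rewrite /bernoulli_weight big_nil mulr1.
rewrite /bernoulli_weight big_cons -/(bernoulli_weight v s) IH /weight /=.
case: y => /=; first by rewrite subSS exprS mulrA.
rewrite add0n subSn ?count_size // exprS; ring.
Qed.

Lemma count_weight_le_bernoulli (v : R) r K : 0 <= v <= 1 - v -> (K <= r)%N ->
  (count (fun s => weight s <= K)%N (bitseqs r))%:R * (v ^+ K * (1 - v) ^+ (r - K)) <= 1.
Proof.
move=> /andP[v0 vq] Kr.
have light_weight s : s \in bitseqs r -> (weight s <= K)%N ->
    v ^+ K * (1 - v) ^+ (r - K) <= bernoulli_weight v s.
  rewrite mem_bitseqs bernoulli_weightE => /eqP hs hw.
  have ws : (weight s <= size s)%N by apply: count_size.
  have -> : (size s - weight s = (K - weight s) + (r - K))%N by lia.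
  rewrite -(subnKC hw) addKn !exprD mulrA ler_wpM2r ?exprn_ge0 //; first lra.
  by rewrite ler_wpM2l ?exprn_ge0 // lerXn2r // nnegrE; lra.
rewrite -sum1_count natr_sum mulr_suml -[leRHS](sum_bernoulli_weight v r).
rewrite [leRHS](bigID (fun s => weight s <= K)%N) /= -[leLHS]addr0 lerD //.
  rewrite big_seq_cond [leRHS]big_seq_cond; apply: ler_sum => s /andP[sr hw].
  by rewrite mul1r light_weight.
by apply: sumr_ge0 => s _; rewrite bernoulli_weightE mulr_ge0 ?exprn_ge0 //; lra.
Qed.

Lemma expR_entropy_le_bernoulli (v : R) (r K : nat) :
  0 < v <= 1 - v -> K%:R <= v * r%:R -> (K <= r)%N ->
  expR (- (r%:R * entropy v)) <= v ^+ K * (1 - v) ^+ (r - K).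
Proof.
move=> /andP[v0 vq] hK Kr; have q0 : 0 < 1 - v by lra.
rewrite -[leRHS]lnK ?posrE ?mulr_gt0 ?exprn_gt0 // ler_expR.
rewrite lnM ?posrE ?exprn_gt0 // !lnXn // -[ln v *+ _]mulr_natr.
rewrite -[ln (1 - v) *+ _]mulr_natr natrB //.
have hl : ln v <= ln (1 - v) by rewrite ler_ln ?posrE.
have key : 0 <= (v * r%:R - K%:R) * (ln (1 - v) - ln v) by apply: mulr_ge0; lra.
have e : ln v * K%:R + ln (1 - v) * (r%:R - K%:R) + r%:R * entropy v =
         (v * r%:R - K%:R) * (ln (1 - v) - ln v) by rewrite /entropy; ring.
lra.
Qed.

Lemma count_weight_le_expR (v : R) r K : 0 < v <= 2^-1 -> K%:R <= v * r%:R ->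
  (count (fun s => weight s <= K)%N (bitseqs r))%:R <= expR (r%:R * entropy v).
Proof.
move=> /andP[v0 v2] hK.
have vq : 0 < v <= 1 - v by rewrite v0 /=; lra.
have Kr : (K <= r)%N by rewrite -(ler_nat R); apply: le_trans hK _; rewrite ler_piMl //; lra.
have hW := expR_entropy_le_bernoulli vq hK Kr.
have vq' : 0 <= v <= 1 - v by rewrite (ltW v0) /=; lra.
have hc := count_weight_le_bernoulli vq' Kr.
have E0 : 0 < expR (- (r%:R * entropy v)) := expR_gt0 _.
rewrite -[r%:R * entropy v]opprK expRN -(ler_pM2r E0) mulVf ?gt_eqF //.
by apply: le_trans hc; apply: ler_wpM2l.
Qed.

End Entropy.

Section BinomialMode.
Variables (R : realType) (N : nat) (p : R).

Definition binomial_term (i : nat) : R := 'C(N, i)%:R * p ^+ i * (1 - p) ^+ (N - i).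

Lemma sum_binomial_term : \sum_(i < N.+1) binomial_term i = 1.
Proof.
rewrite -(expr1n R N) -[X in X ^+ _](subrK p) exprDn.
by apply: eq_bigr => i _; rewrite /binomial_term -mulr_natl; ring.
Qed.

Lemma binomial_termS i : (i < N)%N ->
  binomial_term i.+1 * (i.+1%:R * (1 - p)) = binomial_term i * ((N - i)%:R * p).
Proof.
move=> hi; rewrite /binomial_term.
have NiS : (N - i = (N - i.+1).+1)%N by lia.
have e : 'C(N, i.+1)%:R * i.+1%:R = 'C(N, i)%:R * (N - i.+1).+1%:R :> R.
  by rewrite -!natrM mulnC mul_bin_left -NiS mulnC.
rewrite NiS !exprS.
transitivity ('C(N, i.+1)%:R * i.+1%:R * (p * p ^+ i * (1 - p) ^+ (N - i.+1) * (1 - p)) :> R).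
  by ring.
by rewrite e; ring.
Qed.

Hypotheses (p0 : 0 < p) (p1 : p < 1).
Variable J : nat.
Hypothesis (hJ : N.+1%:R * p - 1 <= J%:R <= N.+1%:R * p).

Let mode_leN : (J <= N)%N.
Proof.
have /andP[_ hJ2] := hJ; rewrite -ltnS -(ltr_nat R); apply: le_lt_trans hJ2 _.
by rewrite -[ltRHS]mulr1 ltr_pM2l ?ltr0n.
Qed.

Lemma binomial_term_le_mode i : (i <= N)%N -> binomial_term i <= binomial_term J.
Proof.
move=> iN; have /andP[hJ1 hJ2] := hJ.
have q0 : 0 < 1 - p by rewrite subr_gt0.
have JN := mode_leN.
have T0 j : 0 <= binomial_term j by rewrite /binomial_term !mulr_ge0 // exprn_ge0 // ltW.
have NS : N.+1%:R = N%:R + 1 :> R by rewrite -natr1.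
have step_pos j : 0 < j.+1%:R * (1 - p) by rewrite mulr_gt0 ?ltr0n.
have incr : {in [pred x | x <= J]%N &,
    {homo binomial_term : x y / (x <= y)%N >-> x <= y}}.
  apply: homo_leq_in => [x|y x z|x y|j]; [exact: lexx | exact: le_trans | | ].
    by rewrite !inE => _ yJ z /andP[_ zy]; apply: ltnW (leq_trans zy yJ).
  rewrite !inE => _ jJ; have jN := leq_trans jJ JN.
  rewrite -(ler_pM2r (step_pos j)) binomial_termS // ler_wpM2l // natrB ?(ltnW jN) //.
  have : j.+1%:R <= J%:R :> R by rewrite ler_nat.
  rewrite -natr1; lra.
have decr : {in [pred x | J <= x <= N]%N &,
    {homo binomial_term : x y / (x <= y)%N >-> y <= x}}.
  apply: homo_leq_in => [x|y x z hxy hyz|x y|j]; [exact: lexx | exact: le_trans hyz hxy | | ].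
    rewrite !inE => /andP[Jx _] /andP[_ yN] z /andP[xz zy].
    by rewrite inE (leq_trans Jx (ltnW xz)) (leq_trans (ltnW zy) yN).
  rewrite !inE => /andP[Jj _] /andP[_ jN].
  rewrite -(ler_pM2r (step_pos j)) binomial_termS // ler_wpM2l // natrB ?(ltnW jN) //.
  have : J%:R <= j%:R :> R by rewrite ler_nat.
  rewrite -natr1; lra.
have [iJ | Ji] := leqP i J; [apply: incr | apply: decr]; rewrite ?inE ?leqnn ?JN ?iN ?(ltnW Ji) //.
Qed.

Lemma binomial_mode_ge : 1 <= N.+1%:R * binomial_term J.
Proof.
apply: (@le_trans _ _ (\sum_(i < N.+1) binomial_term J)).
  rewrite -[leLHS]sum_binomial_term; apply: ler_sum => i _.
  by apply: binomial_term_le_mode; rewrite -ltnS.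
by rewrite sumr_const card_ord mulr_natl.
Qed.

Lemma binomial_mode_weight_le : p <= 2^-1 ->
  p ^+ J * (1 - p) ^+ (N - J) <=
  expR (- (N%:R * entropy p - (1 - p) * (ln (1 - p) - ln p))).
Proof.
move=> p2; have /andP[hJ1 _] := hJ; have q0 : 0 < 1 - p by rewrite subr_gt0.
rewrite -[leLHS]lnK ?posrE ?mulr_gt0 ?exprn_gt0 // ler_expR.
rewrite lnM ?posrE ?exprn_gt0 // !lnXn // -[ln p *+ _]mulr_natr.
rewrite -[ln (1 - p) *+ _]mulr_natr natrB ?mode_leN //.
have hl : ln p <= ln (1 - p) by rewrite ler_ln ?posrE //; lra.
have key : 0 <= (J%:R - (N.+1%:R * p - 1)) * (ln (1 - p) - ln p) by apply: mulr_ge0; lra.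
have e : ln p * J%:R + ln (1 - p) * (N%:R - J%:R) +
           (N%:R * entropy p - (1 - p) * (ln (1 - p) - ln p)) =
         - ((J%:R - (N.+1%:R * p - 1)) * (ln (1 - p) - ln p)).
  by rewrite /entropy -natr1; ring.
lra.
Qed.

Lemma expR_entropy_le_binomial : p <= 2^-1 ->
  expR (N%:R * entropy p - (1 - p) * (ln (1 - p) - ln p)) <= N.+1%:R * 'C(N, J)%:R.
Proof.
move=> /binomial_mode_weight_le; set X := N%:R * entropy p - _ => hW.
apply: (@le_trans _ _ (expR X * (N.+1%:R * binomial_term J))).
  apply: ler_peMr; [exact: expR_ge0 | exact: binomial_mode_ge].
apply: (@le_trans _ _ (expR X * (N.+1%:R * 'C(N, J)%:R * expR (- X)))).
  by rewrite ler_wpM2l ?expR_ge0 // /binomial_term -!mulrA !ler_wpM2l.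
by rewrite mulrCA -expRD subrr expR0 mulr1.
Qed.

End BinomialMode.

Local Open Scope classical_set_scope.

Lemma admits0 n t : admits n t 0.
Proof. by exists (fun _ _ => false) => -[]. Qed.

Lemma Mnt_admits n t : admits n t (Mnt n t).
Proof.
have P0 : `[< admits n t (@ord0 (2 ^ n)) >] by apply/asboolP; exact: admits0.
by rewrite /Mnt (bigop.bigmax_eq_arg ord0 P0); case: fintype.arg_maxnP => // i /asboolP.
Qed.

Lemma Mnt_le_exp2 n t : (Mnt n t <= 2 ^ n)%N.
Proof. by apply/bigop.bigmax_leqP => i _; rewrite -ltnS. Qed.

Section Rate.
Variable R : realType.

Lemma limn_sup_le (u : R^nat) (L : R) : bounded_fun u ->
  (forall e, 0 < e -> \forall n \near \oo, u n <= L + e) -> limn_sup u <= L.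
Proof.
move=> ub hu; rewrite limn_supE //; apply/ler_addgt0Pr => e e0.
have [N _ HN] := hu e e0.
apply: (@le_trans _ _ (sups u N)).
  by apply: ge_inf; [exact: bounded_fun_has_lbound_sups | exists N].
apply: ge_sup; first by exists (u N), N => /=.
by move=> _ [m /= Nm <-]; apply: HN.
Qed.

Lemma log2_natr_ge0 k : 0 <= log2 (k%:R : R).
Proof.
rewrite /log2; case: k => [|k]; first by rewrite ln0 ?mul0r.
by rewrite divr_ge0 // ln_ge0 // ?ler1n // ltW // ln2_gt0.
Qed.

Lemma log2_natr_le_expR k (x : R) : 0 <= x -> k%:R <= expR x -> log2 (k%:R : R) <= x / ln 2.
Proof.
move=> x0 hk; apply: ler_wpM2r; first by rewrite invr_ge0 ltW // ln2_gt0.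
case: k hk => [|k] hk; first by rewrite ln0.
by rewrite -ler_expR lnK ?posrE ?ltr0n.
Qed.

Lemma log2_natr_le k n : (k <= 2 ^ n)%N -> log2 (k%:R : R) <= n%:R.
Proof.
move=> hk; have l2 := ln2_gt0 R.
apply: le_trans (log2_natr_le_expR (x := n%:R * ln 2) _ _) _; first by rewrite mulr_ge0 // ltW.
  by rewrite expRM_natl lnK ?posrE // -natrX ler_nat.
by rewrite mulfK ?gt_eqF.
Qed.

Lemma bounded_rate_seq (tau : R) :
  bounded_fun (fun n : nat =>
    (n%:R)^-1 * log2 ((Mnt n `|Num.ceil (tau * n%:R)|%N)%:R : R)).
Proof.
rewrite /bounded_near; near=> M => n _ /=.
rewrite ger0_norm; last by rewrite mulr_ge0 ?invr_ge0 // log2_natr_ge0.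
have : 1 <= M by near: M; apply: nbhs_pinfty_ge; rewrite num_real.
apply: le_trans; case: n => [|n]; first by rewrite invr0 mul0r.
by rewrite ler_pdivrMl ?ltr0n // mulr1 log2_natr_le ?Mnt_le_exp2.
Unshelve. all: by end_near.
Qed.

Lemma truncn_mul_le (x : R) n : 0 <= x <= 1 -> (Num.truncn (x * n%:R) <= n)%N.
Proof.
move=> /andP[x0 x1]; have /andP[lo _] := truncn_itv (mulr_ge0 x0 (ler0n R n)).
by rewrite -(ler_nat R); apply: le_trans lo _; rewrite ler_piMl.
Qed.

Lemma complement_truncn_itv (x : R) n : 0 <= x <= 1 ->
  (1 - x) * n%:R <= (n - Num.truncn (x * n%:R))%:R < (1 - x) * n%:R + 1.
Proof.
move=> hx; have /andP[x0 _] := hx.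
have /andP[lo hi] := truncn_itv (mulr_ge0 x0 (ler0n R n)).
rewrite natrB ?truncn_mul_le //; move: hi; rewrite -natr1 => hi.
by apply/andP; split; lra.
Qed.

Lemma abs_ceil_ge (y : R) : 0 <= y -> y <= (`|Num.ceil y|%N)%:R.
Proof. by move=> y0; rewrite natr_absz ger0_norm ?ceil_ge // ceil_ge0; lra. Qed.

Lemma truncn_le_abs_ceil (x y : R) : 0 <= x <= y -> (Num.truncn x <= `|Num.ceil y|)%N.
Proof.
move=> /andP[x0 xy]; have /andP[lo _] := truncn_itv x0.
by rewrite -(ler_nat R); apply: le_trans lo (le_trans xy (abs_ceil_ge (le_trans x0 xy))).
Qed.

Lemma near_infty_le_mul (a c : R) : 0 < a -> \forall n \near \oo, c <= a * n%:R.
Proof.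
move=> a0; near=> n; rewrite mulrC -ler_pdivrMr //; apply: ltW; near: n.
exact: nbhs_infty_gtr.
Unshelve. all: by end_near.
Qed.

Lemma Rate_le_expR (tau tau' a b : R) : 0 <= tau' <= 1 -> 0 <= a -> 0 <= b ->
  (\forall n \near \oo, (Mnt n `|Num.ceil (tau * n%:R)|%N)%:R <=
      expR (b + a * (n - Num.truncn (tau' * n%:R))%:R)) ->
  Rate tau <= (1 - tau') * (a / ln 2).
Proof.
move=> htau' a0 b0 hM; apply: limn_sup_le => [|e e0]; first exact: bounded_rate_seq.
have l2 := ln2_gt0 R; near=> n.
have n0 : 0 < n%:R :> R by near: n; exact: nbhs_infty_gtr.
have ne : (b + a) / (e * ln 2) < n%:R by near: n; exact: nbhs_infty_gtr.
have /andP[_ hm] := complement_truncn_itv n htau'.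
have am : a * (n - Num.truncn (tau' * n%:R))%:R <= a * ((1 - tau') * n%:R + 1).
  by rewrite ler_wpM2l // ltW.
have hlog : log2 (Mnt n `|Num.ceil (tau * n%:R)|%N)%:R <=
    (b + a * (n - Num.truncn (tau' * n%:R))%:R) / ln 2.
  by apply: log2_natr_le_expR; [rewrite addr_ge0 ?mulr_ge0 | near: n].
apply: le_trans (ler_wpM2l _ hlog) _; first by rewrite invr_ge0 ltW.
move: ne; rewrite ltr_pdivrMr ?mulr_gt0 // => ne.
set m := (n - _)%N in am hlog *.
rewrite -(ler_pM2r (mulr_gt0 n0 l2)).
have -> : n%:R^-1 * ((b + a * m%:R) / ln 2) * (n%:R * ln 2) = b + a * m%:R.
  by field; rewrite !gt_eqF.
have -> : ((1 - tau') * (a / ln 2) + e) * (n%:R * ln 2) =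
    (1 - tau') * a * n%:R + e * n%:R * ln 2 by field; rewrite gt_eqF.
lra.
Unshelve. all: by end_near.
Qed.

Lemma Rate_le_one_sub (tau tau' : R) : 0 <= tau' <= tau -> tau <= 1 -> Rate tau <= 1 - tau'.
Proof.
move=> /andP[tp0 tpt] t1; have l2 := ln2_gt0 R.
have -> : 1 - tau' = (1 - tau') * (ln 2 / ln 2) by rewrite divff ?gt_eqF // mulr1.
apply: (Rate_le_expR (b := 0)) => //; [by rewrite tp0; lra | exact: ltW |].
apply: filterE => n; rewrite add0r (mulrC (ln 2)) expRM_natl lnK ?posrE // -natrX ler_nat.
have [c hc] := Mnt_admits n `|Num.ceil (tau * n%:R)|%N.
apply: card_le_exp2 hc _ _; last by rewrite truncn_mul_le // tp0; lra.
by apply: truncn_le_abs_ceil; rewrite mulr_ge0 // ler_wpM2r.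
Qed.

End Rate.

Section MainBound.
Variable R : realType.

Lemma Mnt_le_light_add_heavy n t t' K J (v : R) :
  (t' <= t)%N -> (t' <= n)%N -> (J <= t - t')%N -> (J <= K.+1)%N ->
  0 < v <= 2^-1 -> K%:R <= v * (n - t')%:R ->
  (Mnt n t)%:R <= expR ((n - t')%:R * entropy v) + 2 ^+ (n - t') / 'C(K.+1, J)%:R.
Proof.
move=> htt htn hJ hJK hv hK; have [c hc] := Mnt_admits n t.
have C0 : 0 < 'C(K.+1, J)%:R :> R by rewrite ltr0n bin_gt0.
apply: (@le_trans _ _ ((count (fun s => weight s <= K)%N (bitseqs (n - t')))%:R +
                        (2 ^ (n - t') %/ 'C(K.+1, J))%:R)).
  by rewrite -natrD ler_nat; apply: (card_le_light_add_heavy hc).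
apply: lerD; first exact: count_weight_le_expR.
by rewrite ler_pdivlMr // -natrM -natrX ler_nat leq_divM.
Qed.

Lemma exp2_div_binomial_le (m N J : nat) (p : R) :
  0 < p <= 2^-1 -> N.+1%:R * p - 1 <= J%:R <= N.+1%:R * p ->
  2 ^+ m / 'C(N, J)%:R <=
  expR (m%:R * ln 2 + ln N.+1%:R - (N%:R * entropy p - (1 - p) * (ln (1 - p) - ln p))).
Proof.
move=> /andP[p0 p2] hJ; set X := N%:R * entropy p - _.
have hX : expR X <= N.+1%:R * 'C(N, J)%:R.
  by apply: expR_entropy_le_binomial => //; lra.
have C0 : 0 < 'C(N, J)%:R :> R.
  by have := lt_le_trans (expR_gt0 X) hX; rewrite pmulr_rgt0 ?ltr0n.
rewrite !expRD expRN expRM_natl !lnK ?posrE ?ltr0n // -mulrA ler_pM2l ?exprn_gt0 //.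
by rewrite ler_pdivlMr ?expR_gt0 // mulrC ler_pdivrMr.
Qed.

Lemma heavy_exponent_le (v p d : R) (m K : nat) :
  0 < p <= 2^-1 -> 0 < d -> v * m%:R - 3 <= K.+1%:R -> (K.+2 <= m)%N ->
  m%:R * ln 2 + ln K.+2%:R - (K.+1%:R * entropy p - (1 - p) * (ln (1 - p) - ln p)) <=
  m%:R * (ln 2 + d - v * entropy p) + (3 * entropy p + (1 - p) * (ln (1 - p) - ln p) - ln d).
Proof.
move=> /andP[p0 p2] d0 hK hKm.
have Hp0 : 0 <= entropy p by apply: entropy_ge0; apply/andP; split; lra.
have hl : ln K.+2%:R <= d * m%:R - ln d.
  have := ln_sublinear (mulr_gt0 d0 (ltr0Sn R K.+1)); rewrite lnM ?posrE ?ltr0n //.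
  have : d * K.+2%:R <= d * m%:R by rewrite ler_pM2l // ler_nat.
  lra.
have : (v * m%:R - 3) * entropy p <= K.+1%:R * entropy p by rewrite ler_wpM2r.
lra.
Qed.

Lemma mode_le_error_budget (tau tau' v p : R) (n K J : nat) :
  0 <= tau' <= tau -> tau <= 1 -> 0 < v <= 1 -> 0 < p -> p * v * (1 - tau') <= tau - tau' ->
  K.+3%:R <= v * (n - Num.truncn (tau' * n%:R))%:R -> J%:R <= K.+2%:R * p ->
  (J <= `|Num.ceil (tau * n%:R)| - Num.truncn (tau' * n%:R))%N.
Proof.
move=> /andP[tp0 tpt] t1 /andP[v0 v1] p0 hpv hK hJ.
have htau' : 0 <= tau' <= 1 by rewrite tp0; lra.
have t0 : 0 <= tau' * n%:R by rewrite mulr_ge0.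
have htt : (Num.truncn (tau' * n%:R) <= `|Num.ceil (tau * n%:R)|)%N.
  by apply: truncn_le_abs_ceil; rewrite t0 ler_wpM2r.
rewrite leq_subRL // -(ler_nat R) natrD.
have /andP[t'_le _] := truncn_itv t0.
have t_ge := abs_ceil_ge (le_trans t0 (ler_wpM2r (ler0n _ n) tpt)).
have /andP[_ m_hi] := complement_truncn_itv n htau'.
move: hK m_hi; set m := (n - _)%N => hK m_hi.
have e1 : K.+2%:R * p <= (v * m%:R - 1) * p.
  by rewrite ler_pM2r //; move: hK; rewrite -natr1; lra.
have e2 : p * v * m%:R <= p * v * ((1 - tau') * n%:R + 1) by rewrite ler_wpM2l ?mulr_ge0 ?ltW.
have e3 : p * v * (1 - tau') * n%:R <= (tau - tau') * n%:R by rewrite ler_wpM2r.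
have e4 : p * v <= p by rewrite ler_piMr // ltW.
lra.
Qed.

Lemma Mnt_le_expR_entropy (tau tau' v p d : R) (n : nat) :
  0 <= tau' <= tau -> tau < 1 -> 0 < v <= 2^-1 -> 0 < p <= 2^-1 ->
  p * v * (1 - tau') <= tau - tau' -> 0 < d -> ln 2 - v * entropy p + 2 * d <= entropy v ->
  3 <= v * (n - Num.truncn (tau' * n%:R))%:R ->
  3 * entropy p + (1 - p) * (ln (1 - p) - ln p) - ln d <=
    d * (n - Num.truncn (tau' * n%:R))%:R ->
  (Mnt n `|Num.ceil (tau * n%:R)|%N)%:R <=
    expR (ln 2 + entropy v * (n - Num.truncn (tau' * n%:R))%:R).
Proof.
move=> htau t1 hv hp hpv d0 hd; have [/andP[tp0 tpt] /andP[v0 v2]] := (htau, hv).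
have /andP[p0 p2] := hp; have htau' : 0 <= tau' <= 1 by rewrite tp0; lra.
have hv1 : 0 < v <= 1 by rewrite v0 /=; lra.
have htt : (Num.truncn (tau' * n%:R) <= `|Num.ceil (tau * n%:R)|)%N.
  by apply: truncn_le_abs_ceil; rewrite mulr_ge0 // ler_wpM2r.
have htn := truncn_mul_le n htau'.
set m := (n - _)%N => vm3 hdm.
have vm0 : 0 <= v * m%:R by apply: le_trans vm3.
have vm_le : v * m%:R <= m%:R by rewrite ler_piMl //; lra.
have /andP[vm_lo vm_hi] := truncn_itv vm0.
(* [K + 3 = floor (v m)], and [J = floor ((K + 2) p)] is a mode of the binomial law
   of parameters [K + 1] and [p]. *)
have K3 : (3 <= Num.truncn (v * m%:R))%N by rewrite truncn_ge_nat.
set K := (Num.truncn (v * m%:R) - 3)%N.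
have eK : K.+3 = Num.truncn (v * m%:R) by rewrite /K -addn3 subnK.
rewrite -eK in vm_lo vm_hi.
have hKv : K%:R <= v * m%:R by apply: le_trans _ vm_lo; rewrite ler_nat !leqW.
have hKm : (K.+3 <= m)%N by rewrite -(ler_nat R); exact: le_trans vm_lo vm_le.
set J := Num.truncn (K.+2%:R * p).
have /andP[J_lo J_hi] := truncn_itv (mulr_ge0 (ler0n R K.+2) (ltW p0)).
have hmode : K.+2%:R * p - 1 <= J%:R <= K.+2%:R * p.
  by rewrite J_lo andbT; move: J_hi; rewrite -(natr1 J); lra.
have hJK : (J <= K.+1)%N.
  rewrite -(ler_nat R); apply: le_trans J_lo _.
  have : K.+2%:R * p <= K.+2%:R * 2^-1 by rewrite ler_wpM2l.
  have : 1 <= K.+1%:R :> R by rewrite ler1n.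
  by rewrite -(natr1 K.+1); lra.
have hJt := mode_le_error_budget htau (ltW t1) hv1 p0 hpv vm_lo J_lo.
have hM := Mnt_le_light_add_heavy htt htn hJt hJK hv hKv.
have hB := exp2_div_binomial_le m hp hmode.
have e4 : K.+4%:R = K.+1%:R + 3 :> R by rewrite -!natr1; ring.
have hvK : v * m%:R - 3 <= K.+1%:R by lra.
have hE := heavy_exponent_le hp d0 hvK (ltnW hKm).
have hmd : m%:R * (ln 2 + d - v * entropy p) <= m%:R * (entropy v - d).
  by rewrite ler_wpM2l //; lra.
have hheavy : 2 ^+ m / 'C(K.+1, J)%:R <= expR (m%:R * entropy v).
  by apply: le_trans hB _; rewrite ler_expR; lra.
apply: le_trans hM _; rewrite expRD lnK ?posrE // (mulrC (entropy v)); lra.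
Qed.

Lemma Rate_le_entropy (tau tau' v p : R) : 0 <= tau' <= tau -> tau < 1 ->
  0 < v <= 2^-1 -> 0 < p <= 2^-1 -> p * v * (1 - tau') <= tau - tau' ->
  ln 2 - v * entropy p < entropy v -> Rate tau <= (1 - tau') * (entropy v / ln 2).
Proof.
move=> htau t1 hv hp hpv hD; have [/andP[tp0 tpt] /andP[v0 v2]] := (htau, hv).
have htau' : 0 <= tau' <= 1 by rewrite tp0; lra.
have tau'1 : 0 < 1 - tau' by lra.
set d := (entropy v - (ln 2 - v * entropy p)) / 2.
have d0 : 0 < d by rewrite divr_gt0 //; lra.
have hd : ln 2 - v * entropy p + 2 * d <= entropy v by rewrite /d; lra.
have Hv0 : 0 <= entropy v by apply: entropy_ge0; rewrite (ltW v0) /=; lra.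
apply: (Rate_le_expR htau' Hv0 (ltW (ln2_gt0 R))).
near=> n; apply: (Mnt_le_expR_entropy htau t1 hv hp hpv d0 hd).
  apply: (@le_trans _ _ (v * (1 - tau') * n%:R)).
    by near: n; apply: near_infty_le_mul; rewrite mulr_gt0.
  by rewrite -mulrA ler_pM2l //; case/andP: (complement_truncn_itv n htau').
apply: (@le_trans _ _ (d * (1 - tau') * n%:R)).
  by near: n; apply: near_infty_le_mul; rewrite mulr_gt0.
by rewrite -mulrA ler_pM2l //; case/andP: (complement_truncn_itv n htau').
Unshelve. all: by end_near.
Qed.

End MainBound.

Section InnerSet.
Variable R : realType.

Lemma h0 : h (0 : R) = 0.
Proof. by rewrite /h /log2 ln0 // subr0 ln1 !mul0r !mulr0 subr0. Qed.

Lemma h_half : h (2^-1 : R) = 1.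
Proof.
have l2 := ln2_gt0 R.
rewrite /h /log2 (_ : 1 - 2^-1 = 2^-1); last by field.
by rewrite lnV ?posrE //; field; rewrite gt_eqF.
Qed.

Lemma continuous_h (x : R) : 0 < x < 1 -> {for x, continuous (@h R)}.
Proof.
move=> /andP[x0 x1].
have c1x : {for x, continuous (fun y : R => ln (1 - y))}.
  apply: (@continuous_comp _ _ _ (fun y : R => 1 - y) (@ln R)).
    by apply: cvgB; [exact: cvg_cst | exact: cvg_id].
  by apply: continuous_ln; rewrite subr_gt0.
apply: cvgB; apply: cvgM.
- by apply: cvgN; exact: cvg_id.
- by apply: cvgM; [exact: continuous_ln | exact: cvg_cst].
- by apply: cvgB; [exact: cvg_cst | exact: cvg_id].
- by apply: cvgM; [exact: c1x | exact: cvg_cst].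
Qed.

Lemma exists_h_le (z : R) : 0 < z -> exists2 x : R, 0 < x <= 2^-1 & h x <= z.
Proof.
move=> z0; have l2 := ln2_gt0 R.
set c := Num.min (z * ln 2 / 2) 2^-1.
have c0 : 0 < c by rewrite lt_min divr_gt0 ?mulr_gt0 //=; lra.
have c1 : c < 1 by rewrite gt_min; lra.
have lc1 : 0 < 1 - ln c by have := ln_le0 (ltW c1); lra.
exists (Num.min 2^-1 (c / (1 - ln c))).
  by rewrite lt_min ge_min lexx divr_gt0 //=; lra.
set x := Num.min _ _; have x0 : 0 < x by rewrite lt_min divr_gt0 //=; lra.
have x2 : x <= 2^-1 by rewrite ge_min lexx.
have xc : x * (1 - ln c) <= c by rewrite -ler_pdivlMr // ge_min lexx orbT.
rewrite h_entropy ler_pdivrMr //; apply: le_trans (entropy_le _ c0) _.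
  by rewrite x0 /=; lra.
have : c <= z * ln 2 / 2 by rewrite ge_min lexx.
lra.
Qed.

Lemma exists_h_eq (z : R) : 0 < z <= 1 -> exists2 v : R, 0 < v <= 2^-1 & h v = z.
Proof.
move=> /andP[z0 z1]; have [x /andP[x0 x2] hx] := exists_h_le z0.
have hc : {within `[x, 2^-1], continuous (@h R)}.
  apply: continuous_in_subspaceT => y; rewrite inE /= in_itv /= => /andP[xy y2].
  by apply: continuous_h; apply/andP; split; lra.
have hz : Num.min (h x) (h 2^-1) <= z <= Num.max (h x) (h 2^-1).
  by rewrite ge_min le_max h_half hx z1 orbT.
have [v /[!in_itv] /= /andP[xv v2] hvz] := IVT x2 hc hz.
by exists v => //; apply/andP; split; lra.
Qed.

Lemma Rate_le_outside_inner_set (tau tau' v : R) : 0 < tau < 1 -> 0 <= tau' <= tau ->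
  0 < v <= 2^-1 -> h v < 1 ->
  1 - v * h (Num.min ((tau - tau') / (v * (1 - tau'))) 2^-1) < h v ->
  Rate tau <= h v * (1 - tau').
Proof.
move=> /andP[_ t1] htau hv hv1 hcond; have [/andP[tp0 tpt] /andP[v0 v2]] := (htau, hv).
have l2 := ln2_gt0 R; have b0 : 0 < 1 - tau' by lra.
set p := Num.min _ _ in hcond.
have p_ge0 : 0 <= p.
  by rewrite le_min invr_ge0 ler0n andbT divr_ge0 ?mulr_ge0 //; lra.
have p0 : 0 < p.
  rewrite lt_neqAle p_ge0 andbT eq_sym; apply/eqP => p0.
  by move: hcond; rewrite p0 h0 mulr0 subr0; lra.
have hp : 0 < p <= 2^-1 by rewrite p0 ge_min lexx orbT.
have hpv : p * v * (1 - tau') <= tau - tau'.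
  by rewrite -mulrA -ler_pdivlMr ?mulr_gt0 // /p ge_min lexx.
have hD : ln 2 - v * entropy p < entropy v.
  move: hcond; rewrite !h_entropy -(ltr_pM2r l2) mulrBl mul1r divfK ?gt_eqF //.
  by rewrite -mulrA divfK ?gt_eqF.
rewrite h_entropy [_ * (1 - tau')]mulrC; exact: Rate_le_entropy htau t1 hv hp hpv hD.
Qed.

Lemma Rate_le_sup_inner_set (tau tau' : R) : 0 < tau < 1 -> 0 <= tau' <= tau ->
  Rate tau <= sup (inner_set tau tau').
Proof.
move=> htau htau'; have [/andP[_ t1] /andP[_ tpt]] := (htau, htau').
set S := inner_set tau tau'.
have S0 : S 0.
  split; first by rewrite lexx ler01.
  by exists 0; split; rewrite ?h0 ?mul0r ?subr0 ?lexx ?invr_ge0 ?ler0n ?ler01.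
have Sub : has_ubound S by exists 1 => r [/andP[_ r1] _].
have sup0 : 0 <= sup S := ub_le_sup Sub S0.
rewrite leNgt; apply/negP => hlt.
have hR1 : Rate tau <= 1 - tau' := Rate_le_one_sub htau' (ltW t1).
set y := (sup S + Rate tau) / 2.
have b0 : 0 < 1 - tau' by lra.
have [v hv hvz] : exists2 v : R, 0 < v <= 2^-1 & h v = y / (1 - tau').
  by apply: exists_h_eq; rewrite divr_gt0 ?ler_pdivrMr ?mul1r /y //=; lra.
have hy : h v * (1 - tau') = y by rewrite hvz divfK ?gt_eqF.
case: (leP (h v) (1 - v * h (Num.min ((tau - tau') / (v * (1 - tau'))) 2^-1))) => hcond.
  have : S y.
    split; first by rewrite /y; apply/andP; split; lra.
    by exists v; split => //; case/andP: hv => v0 ->; rewrite ltW.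
  by move/(ub_le_sup Sub); rewrite /y; lra.
have hv1 : h v < 1 by rewrite hvz ltr_pdivrMr // mul1r /y; lra.
by have := Rate_le_outside_inner_set htau htau' hv hv1 hcond; rewrite hy /y; lra.
Qed.

End InnerSet.

Theorem theorem3 (R : realType) (tau : R) :
  0 < tau < 1 -> Rate tau <= Rbar tau.
Proof.
move=> htau; apply: lb_le_inf => [|_ [tau' htau' <-]]; last exact: Rate_le_sup_inner_set.
by exists (sup (inner_set tau 0)), 0 => //=; rewrite lexx ltW //; case/andP: htau.
Qed.
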